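(* Let $k\ge 2$ and let $G$ and $H$ be $\Gamma_{\times k,t}$-external graphs with $\delta(G)\ge k$ and $\delta(H)\ge k$. Then \[ \Gamma_{\times k,t}(G\,\Box\,H)\ge\max\{\Gamma_{\times k,t}(G)\cdot|V(H)|,\ \Gamma_{\times k,t}(H)\cdot|V(G)|\}. \]
   Context: A set $S\subseteq V(G)$ is a $k$-tuple total dominating set ($k$TDS) of a graph $G$ with $\delta(G)\ge k$ if $|N_G(x)\cap S|\ge k$ for every $x\in V(G)$. The upper $k$-tuple total domination number $\Gamma_{\times k,t}(G)$ is the maximum cardinality of a minimal (with respect to inclusion) $k$TDS of $G$; a minimal $k$TDS of this cardinality is a $\Gamma_{\times k,t}$-set. For $v\in S$, a vertex $v'$ is a $k$-open private neighbor of $v$ with respect to $S$ if $v\in N_G(v')$ and $|N_G(v')\cap S|=k$; it is external if $v'\notin S$. A graph $G$ is $\Gamma_{\times k,t}$-external if it has a $\Gamma_{\times k,t}$-set $S$ such that every vertex of $S$ has an external $k$-open private neighbor with respect to $S$. The Cartesian product $G\,\Box\,H$ has vertex set $V(G)\times V(H)$, with $(g_1,h_1)\sim(g_2,h_2)$ iff either $g_1=g_2$ and $h_1h_2\in E(H)$, or $h_1=h_2$ and $g_1g_2\in E(G)$. *)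

From HB Require Import structures.
From mathcomp Require Import all_boot.
Set Implicit Arguments. Unset Strict Implicit. Unset Printing Implicit Defensive.

Section Graphs.
Variable T : finType.
Variable e : rel T.

Definition simple_graph : Prop := symmetric e /\ irreflexive e.

Definition nbhd (x : T) : {set T} := [set y | e x y].

Definition min_deg_ge (k : nat) : Prop := forall x : T, k <= #|nbhd x|.

Definition is_kTDS (k : nat) (S : {set T}) : bool :=
  [forall x, k <= #|nbhd x :&: S|].

Definition is_minimal_kTDS (k : nat) (S : {set T}) : bool :=
  is_kTDS k S && [forall S' : {set T}, (S' \proper S) ==> ~~ is_kTDS k S'].

Definition upper_ktdn (k : nat) : nat :=
  \max_(S : {set T} | is_minimal_kTDS k S) #|S|.

Definition is_Gamma_set (k : nat) (S : {set T}) : bool :=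
  is_minimal_kTDS k S && (#|S| == upper_ktdn k).

Definition k_open_pn (k : nat) (S : {set T}) (v v' : T) : bool :=
  (v \in nbhd v') && (#|nbhd v' :&: S| == k).

Definition Gamma_external (k : nat) : Prop :=
  exists S : {set T}, is_Gamma_set k S /\
    forall v, v \in S -> exists v', (v' \notin S) && k_open_pn k S v v'.
End Graphs.

Definition box_rel (T1 T2 : finType) (e1 : rel T1) (e2 : rel T2) : rel (T1 * T2) :=
  fun p q => ((p.1 == q.1) && e2 p.2 q.2) || ((p.2 == q.2) && e1 p.1 q.1).

From mathcomp Require Import all_boot.

(* Let S be a Gamma_{x k,t}-set of G in which every vertex has an external
   k-open private neighbour.  Then S x V(H) is a minimal kTDS of G [] H: each
   vertex (g, h) sees the copy of N_G(g) :&: S in its G-layer, and if v' is an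
   external private neighbour of v, then (v', h) sees only that copy, hence
   drops below k neighbours when (v, h) is removed.  This only uses that the
   first projection makes G [] H "fibred" over G, so the same argument works
   for the second projection. *)

Lemma kTDS_subset (T : finType) (e : rel T) k (A B : {set T}) :
  A \subset B -> is_kTDS e k A -> is_kTDS e k B.
Proof.
move=> sAB /forallP kA; apply/forallP=> x.
by apply: leq_trans (kA x) _; apply/subset_leq_card/setIS.
Qed.

Lemma minimal_kTDS_setD1 (T : finType) (e : rel T) k (S : {set T}) :
  is_kTDS e k S -> (forall x, x \in S -> ~~ is_kTDS e k (S :\ x)) ->
  is_minimal_kTDS e k S.
Proof.
move=> kS kSx; rewrite /is_minimal_kTDS kS; apply/forallP=> S'.
apply/implyP=> /properP[sS'S [x Sx S'x]]; apply: contra (kSx x Sx).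
by apply: kTDS_subset; rewrite subsetD1 sS'S S'x.
Qed.

Lemma minimal_kTDS_le_upper (T : finType) (e : rel T) k (S : {set T}) :
  is_minimal_kTDS e k S -> #|S| <= upper_ktdn e k.
Proof. exact: (leq_bigmax_cond (P := is_minimal_kTDS e k)). Qed.

(* [p] projects U onto T and [lift u a] is the vertex over [a] in the layer
   of [u]; every edge of [E] either stays in a fibre of [p] or is the lift of
   an edge of [e]. *)
Section FibredGraph.
Variables (T U : finType) (e : rel T) (E : rel U).
Variables (p : U -> T) (lift : U -> T -> U).
Hypothesis liftK : forall u, cancel (lift u) p.
Hypothesis lift_lift : forall u a, lift (lift u a) (p u) = u.
Hypothesis lift_edge : forall u a, e (p u) a -> E u (lift u a).
Hypothesis edge_lift : forall u w,
  E u w -> p w = p u \/ e (p u) (p w) /\ w = lift u (p w).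

Lemma card_nbhd_preimset_ge (S : {set T}) u :
  #|nbhd e (p u) :&: S| <= #|nbhd E u :&: p @^-1: S|.
Proof.
rewrite -(card_imset _ (can_inj (liftK u))); apply/subset_leq_card/subsetP.
move=> w /imsetP[a]; rewrite !inE => /andP[ea Sa] ->.
by rewrite lift_edge // liftK.
Qed.

Lemma card_nbhd_preimset_le (S : {set T}) u : p u \notin S ->
  #|nbhd E u :&: p @^-1: S| <= #|nbhd e (p u) :&: S|.
Proof.
move=> Spu; rewrite -(card_imset _ (can_inj (liftK u))).
apply/subset_leq_card/subsetP=> w; rewrite !inE => /andP[/edge_lift Euw Sw].
case: Euw => [pw | [epw ->]]; first by rewrite -pw Sw in Spu.
by apply/imsetP; exists (p w); rewrite ?inE ?epw.
Qed.

Lemma kTDS_preimset k (S : {set T}) :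
  is_kTDS e k S -> is_kTDS E k (p @^-1: S).
Proof.
by move=> /forallP kS; apply/forallP=> u; apply: leq_trans (kS (p u)) _;
  apply: card_nbhd_preimset_ge.
Qed.

Lemma minimal_kTDS_preimset k (S : {set T}) : is_kTDS e k S ->
  (forall v, v \in S -> exists v', (v' \notin S) && k_open_pn e k S v v') ->
  is_minimal_kTDS E k (p @^-1: S).
Proof.
move=> kS ext; apply: minimal_kTDS_setD1; first exact: kTDS_preimset.
move=> x; rewrite inE => Spx; have [v' /and3P[Sv' v'v /eqP kv']] := ext _ Spx.
set u := lift x v'; have pu : p u = v' by rewrite liftK.
have Eux : x \in nbhd E u :&: p @^-1: S.
  rewrite !inE Spx andbT -[X in E _ X](lift_lift x v') lift_edge // pu.
  by move: v'v; rewrite inE.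
apply/negP=> /forallP/(_ u); apply/negP; rewrite -ltnNge.
rewrite -kv' -pu; apply: (leq_trans _ (card_nbhd_preimset_le S u _)); last by rewrite pu.
apply/proper_card/properP; split; first exact/setIS/subD1set.
by exists x => //; rewrite !inE eqxx andbF.
Qed.

Lemma upper_ktdn_preimset k : Gamma_external e k ->
  exists2 S : {set T}, #|S| = upper_ktdn e k & #|p @^-1: S| <= upper_ktdn E k.
Proof.
move=> [S [/andP[/andP[kS _] /eqP cardS] ext]]; exists S => //.
exact/minimal_kTDS_le_upper/minimal_kTDS_preimset.
Qed.

End FibredGraph.

Section BoxProduct.
Variables (T1 T2 : finType) (e1 : rel T1) (e2 : rel T2) (k : nat).

Lemma upper_ktdn_box_l : Gamma_external e1 k ->
  upper_ktdn e1 k * #|T2| <= upper_ktdn (box_rel e1 e2) k.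
Proof.
move=> ext; have [||||S <- preS] :=
  @upper_ktdn_preimset _ _ e1 (box_rel e1 e2) fst (fun u a => (a, u.2)) _ _ _ _ k ext.
- by [].
- by case.
- by move=> [g h] a ga; rewrite /box_rel /= eqxx ga orbT.
- move=> [g h] [g' h']; rewrite /box_rel /= => /orP[/andP[/eqP-> _] | /andP[/eqP<- ->]];
  by [left | right].
rewrite -cardsT -cardsX; suff -> : setX S [set: T2] = fst @^-1: S by [].
by apply/setP=> -[g h]; rewrite !inE andbT.
Qed.

Lemma upper_ktdn_box_r : Gamma_external e2 k ->
  upper_ktdn e2 k * #|T1| <= upper_ktdn (box_rel e1 e2) k.
Proof.
move=> ext; have [||||S <- preS] :=
  @upper_ktdn_preimset _ _ e2 (box_rel e1 e2) snd (fun u b => (u.1, b)) _ _ _ _ k ext.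
- by [].
- by case.
- by move=> [g h] b hb; rewrite /box_rel /= eqxx hb.
- move=> [g h] [g' h']; rewrite /box_rel /= => /orP[/andP[/eqP<- ->] | /andP[/eqP-> _]];
  by [right | left].
rewrite -cardsT mulnC -cardsX; suff -> : setX [set: T1] S = snd @^-1: S by [].
by apply/setP=> -[g h]; rewrite !inE.
Qed.

End BoxProduct.

Theorem mainTheorem10 (k : nat) (T1 T2 : finType) (e1 : rel T1) (e2 : rel T2) :
  2 <= k ->
  simple_graph e1 -> simple_graph e2 ->
  min_deg_ge e1 k -> min_deg_ge e2 k ->
  Gamma_external e1 k -> Gamma_external e2 k ->
  maxn (upper_ktdn e1 k * #|T2|) (upper_ktdn e2 k * #|T1|)
    <= upper_ktdn (box_rel e1 e2) k.
Proof.
move=> _ _ _ _ _ ext1 ext2.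
by rewrite geq_max upper_ktdn_box_l ?upper_ktdn_box_r.
Qed.
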